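(* Let $\mathcal B=\{B_1,\dots,B_m\}$ be a partition of $n$ jobs with processing times $p_1,\dots,p_n$ into $m$ bags. Then $\mathcal B$ is a $\max\{2,\beta(\mathcal B)\}$-robust partition, where $\beta(\mathcal B)=\frac{\max_{B\in\mathcal B,|B|\ge2}p(B)}{\min_{B\in\mathcal B}p(B)}$.
   Context: Jobs $j\in[n]$ have processing times $p_j\ge0$; for a bag $B\subseteq[n]$, $p(B)=\sum_{j\in B}p_j$. For machines with speeds $s_1,\dots,s_m>0$, processing job $j$ on machine $i$ takes time $p_j/s_i$, and the makespan of an assignment is $\max_i(\text{total processing time on } i)/s_i$; $opt(\mathbf p,\mathbf s)$ denotes the minimum makespan over all assignments of the individual jobs to the machines. A partition $\mathcal B$ of the jobs into $m$ bags is $\gamma$-robust if for every speed vector $\mathbf s=(s_1,\dots,s_m)>0$ there is an assignment of the bags (each bag as a whole) to the $m$ machines with makespan at most $\gamma\cdot opt(\mathbf p,\mathbf s)$. *)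

From mathcomp Require Import all_boot all_order all_algebra.
Set Implicit Arguments. Unset Strict Implicit. Unset Printing Implicit Defensive.
Import Order.TTheory GRing.Theory Num.Theory.
Local Open Scope ring_scope.

Section Sched.
Variables (R : realFieldType) (n m : nat).

Definition load (p : 'I_n -> R) (f : 'I_n -> 'I_m) (i : 'I_m) : R :=
  \sum_(j < n | f j == i) p j.

Definition makespan (p : 'I_n -> R) (s : 'I_m -> R) (a : 'I_n -> 'I_m) : R :=
  \big[Num.max/0]_(i < m) (load p a i / s i).

(* a partition into m bags is given by b : jobs -> bags (job j lies in bag b j);
   p(B_k) = load p b k.  An assignment of bags to machines is sigma : bags -> machines;
   each job of bag k then runs on machine sigma k. *)

(* makespan <= gamma * opt, with opt the minimum over all job assignments a *)
Definition robust (p : 'I_n -> R) (b : 'I_n -> 'I_m) (gamma : R) : Prop :=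
  forall s : 'I_m -> R, (forall i, 0 < s i) ->
  exists sigma : 'I_m -> 'I_m,
    forall a : 'I_n -> 'I_m,
      makespan p s (fun j => sigma (b j)) <= gamma * makespan p s a.

(* beta(B) = max_{|B|>=2} p(B) / min_B p(B); the empty max is 0.
   The min is taken with neutral element the total processing time, which is an
   upper bound of all p(B), so it is the true minimum whenever m > 0. *)
Definition total (p : 'I_n -> R) : R := \sum_(j < n) p j.

Definition beta (p : 'I_n -> R) (b : 'I_n -> 'I_m) : R :=
  (\big[Num.max/0]_(k < m | (1 < #|[set j | b j == k]|)%N) load p b k)
  / (\big[Num.min/total p]_(k < m) load p b k).

End Sched.

From Pilot Require Import Defs.
From mathcomp Require Import all_boot all_order all_algebra.
From mathcomp Require Import lra.
Import Order.TTheory GRing.Theory Num.Theory.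
Local Open Scope ring_scope.

(* Fix the speeds and an optimal job assignment of makespan T, so that
   machine i has capacity C_i = T s_i.  Place the bags one by one in order of
   non-increasing p(B), each on a machine whose load then stays within gamma C_i,
   where gamma = max(2, beta).  Suppose the next bag x fits nowhere.  If some
   bag with at least two jobs is at least as large as x, then p(x) <= beta p(B)
   for every bag B, and summing the violated inequalities over all machines
   contradicts gamma >= 2.  Otherwise the bags at least as large as x are
   single jobs; these carry more weight than the bags already placed, so in the
   optimal assignment some machine i holds more of their weight than the greedy
   load L_i, hence holds one of them, so C_i >= p(x) and
   L_i + p(x) < 2 C_i <= gamma C_i. *)

Section SumWitness.
Context {R : realDomainType}.

Lemma exists_lt_of_sum_lt {I : finType} (F G : I -> R) :
  \sum_i F i < \sum_i G i -> exists i, F i < G i.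
Proof.
move=> lt_sum; have [i lt_i|ge_all] := pickP (fun i => F i < G i).
  by exists i.
by move: lt_sum; rewrite ltNge ler_sum // => i _; rewrite leNgt ge_all.
Qed.

Lemma exists_le_of_sum_le {I : finType} (i0 : I) (F G : I -> R) :
  \sum_i F i <= \sum_i G i -> exists i, F i <= G i.
Proof.
move=> le_sum; have [i le_i|gt_all] := pickP (fun i => F i <= G i).
  by exists i.
suff : \sum_i G i < \sum_i F i by rewrite ltNge le_sum.
apply: ltr_sum => [|i _]; first by apply/hasP; exists i0; rewrite ?mem_index_enum.
by rewrite ltNge gt_all.
Qed.

End SumWitness.

Section Loads.
Context {R : realFieldType} {n m : nat} (p : 'I_n -> R).

Lemma load_ge0 (f : 'I_n -> 'I_m) i : (forall j, 0 <= p j) -> 0 <= load p f i.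
Proof. by move=> p_ge0; apply: sumr_ge0. Qed.

Lemma sum_load (f : 'I_n -> 'I_m) : \sum_i load p f i = Defs.total p.
Proof. by rewrite /Defs.total (partition_big f xpredT). Qed.

Lemma load_comp m' (f : 'I_n -> 'I_m) (g : 'I_m -> 'I_m') i :
  load p (fun j => g (f j)) i = \sum_(k | g k == i) load p f k.
Proof.
rewrite /load (partition_big f (fun k => g k == i)) => [|j /eqP //].
apply: eq_bigr => k /eqP gk; apply: eq_bigl => j.
by have [->|] := eqVneq (f j) k; rewrite ?gk ?eqxx ?andbF.
Qed.

Variable s : 'I_m -> R.

Lemma makespan_ge0 (a : 'I_n -> 'I_m) : 0 <= makespan p s a.
Proof. exact: bigmax_ge_id. Qed.

Lemma optimal_assignment_exists (a1 : 'I_n -> 'I_m) :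
  exists a0 : 'I_n -> 'I_m, forall a, makespan p s a0 <= makespan p s a.
Proof.
pose F (f : {ffun 'I_n -> 'I_m}) := makespan p s f.
have [a0 _ a0_min] := @arg_minP _ _ _ [ffun j => a1 j] xpredT F isT.
exists a0 => a; have := a0_min [ffun j => a j] isT.
rewrite /F /makespan /load.
by under [X in _ <= X]eq_bigr do under eq_bigl do rewrite ffunE.
Qed.

Hypothesis s_gt0 : forall i, 0 < s i.

Lemma load_le_makespan (a : 'I_n -> 'I_m) i : load p a i <= makespan p s a * s i.
Proof.
by rewrite -ler_pdivrMr //; apply: (le_bigmax _ (fun i => load p a i / s i)).
Qed.

Lemma makespan_le (a : 'I_n -> 'I_m) c :
  0 <= c -> (forall i, load p a i <= c * s i) -> makespan p s a <= c.
Proof. by move=> c_ge0 le_c; apply: bigmax_le => // i _; rewrite ler_pdivrMr. Qed.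

End Loads.

Section Greedy.
Context {R : realFieldType} {n m : nat} {p : 'I_n -> R} {b : 'I_n -> 'I_m}.
Hypothesis p_ge0 : forall j, 0 <= p j.
Hypothesis bag_gt0 : forall k, 0 < load p b k.
Context {gamma : R}.
Hypotheses (two_le_gamma : 2 <= gamma) (beta_le_gamma : beta p b <= gamma).

Local Notation q := (load p b).
Local Notation big_bag k := (1 < #|[set j | b j == k]|)%N.

Let gamma_ge0 : 0 <= gamma. Proof. exact: le_trans two_le_gamma. Qed.

Lemma load_small_bag j : ~~ big_bag (b j) -> q (b j) = p j.
Proof.
apply: contraNeq; rewrite /load (bigD1 j) //= -subr_eq0 addrC addrK.
move=> /eqP /(psumr_neq0P (fun i _ => p_ge0 i)) [j' /andP[/andP[bj' j'j] _]].
have : [set j; j'] \subset [set i | b i == b j].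
  by apply/subsetP => i; rewrite !inE => /orP[] /eqP ->; rewrite ?eqxx.
by move/subset_leq_card; rewrite cards2 eq_sym j'j.
Qed.

Lemma big_bag_le k0 k : big_bag k0 -> q k0 <= gamma * q k.
Proof.
move=> big_k0.
set M := \big[Num.max/0]_(k | big_bag k) q k.
set mn := \big[Num.min/Defs.total p]_k q k.
have mn_gt0 : 0 < mn.
  apply: lt_bigmin => [|i _]; last exact: bag_gt0.
  rewrite -(sum_load p b) (bigD1 k) //= ltr_wpDr ?bag_gt0 //.
  by apply: sumr_ge0 => i _; apply: ltW.
have M_eq : M = beta p b * mn by rewrite /beta -/M -/mn divfK ?gt_eqF.
have : q k0 <= M by apply: (le_bigmax_cond _ (fun k => q k)).
rewrite M_eq => /le_trans; apply; apply: (le_trans (y := gamma * mn)).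
  by rewrite ler_pM2r.
by apply: ler_wpM2l => //; apply: bigmin_le.
Qed.

Context {a : 'I_n -> 'I_m} {C : 'I_m -> R}.
Hypothesis load_le_cap : forall i, load p a i <= C i.

Let cap_ge0 i : 0 <= C i.
Proof. exact: le_trans (load_ge0 p a i p_ge0) (load_le_cap i). Qed.

Lemma sum_partial_load (S : {set 'I_m}) (sg : 'I_m -> 'I_m) :
  \sum_i \sum_(k in S | sg k == i) q k = \sum_(k in S) q k.
Proof. by rewrite [RHS](partition_big sg xpredT). Qed.

Lemma fit_below_big_bag (S : {set 'I_m}) sg x k0 :
  (forall k, k \in S -> q x <= q k) -> big_bag k0 -> q x <= q k0 ->
  exists i, \sum_(k in S | sg k == i) q k + q x <= gamma * C i.
Proof.
move=> x_le_S big_k0 x_le_k0.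
have x_le k : q x <= gamma * q k := le_trans x_le_k0 (big_bag_le k0 k big_k0).
suff /(exists_le_of_sum_le x) [i fit_i] :
    \sum_i (\sum_(k in S | sg k == i) q k + q x) <= \sum_i gamma * C i.
  by exists i.
rewrite big_split /= sum_partial_load.
have le_S : \sum_(k in S) q x <= \sum_(k in S) q k by apply: ler_sum.
have le_notS : \sum_(k | k \notin S) q x <= gamma * \sum_(k | k \notin S) q k.
  by rewrite mulr_sumr; apply: ler_sum.
have le_cap : gamma * \sum_k q k <= \sum_i gamma * C i.
  by rewrite -mulr_sumr sum_load -(sum_load p a) ler_wpM2l // ler_sum.
have le_2S : 2 * \sum_(k in S) q k <= gamma * \sum_(k in S) q k.
  by apply: ler_wpM2r => //; apply: sumr_ge0 => k _; apply: ltW.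
move: le_cap; rewrite !(bigID (mem S) xpredT) /=.
lra.
Qed.

Lemma fit_among_small_bags (S : {set 'I_m}) sg x :
  x \notin S -> (forall k, k \in S -> q x <= q k) ->
  (forall k, q x <= q k -> ~~ big_bag k) ->
  exists i, \sum_(k in S | sg k == i) q k + q x <= gamma * C i.
Proof.
move=> xS x_le_S small.
pose large j := q x <= q (b j).
pose pL j := if large j then p j else 0.
have loadL_bag k : load pL b k = if q x <= q k then q k else 0.
  rewrite /load; case: ifP => x_le_k.
    by apply: eq_bigr => j /eqP bj; rewrite /pL /large bj x_le_k.
  by apply: big1 => j /eqP bj; rewrite /pL /large bj x_le_k.
have sum_loadL : q x + \sum_(k in S) q k <= \sum_i load pL a i.
  rewrite sum_load -(sum_load pL b) -big_setU1 //= big_mkcond /=.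
  apply: ler_sum => k _; rewrite loadL_bag in_setU1.
  have [->|_ /=] := eqVneq k x; first by rewrite lexx.
  case: (boolP (k \in S)) => [/x_le_S -> //|_].
  by case: ifP => _; [apply: ltW|].
have /exists_lt_of_sum_lt [i lt_i] :
    \sum_i \sum_(k in S | sg k == i) q k < \sum_i load pL a i.
  by rewrite sum_partial_load; have := bag_gt0 x; lra.
exists i.
have /existsP[j /andP[/eqP aj large_j]] : [exists j, (a j == i) && large j].
  apply: contraTT lt_i => /existsPn none; rewrite -leNgt.
  have -> : load pL a i = 0.
    apply: big1 => j aj; rewrite /pL.
    by have := none j; rewrite aj /= => /negbTE ->.
  by apply: sumr_ge0 => k _; apply: ltW.
have x_le_pj : q x <= p j by rewrite -load_small_bag ?small.
have pj_le : p j <= load p a i.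
  by rewrite /load (bigD1 j) ?aj //= lerDl sumr_ge0.
have loadL_le : load pL a i <= load p a i.
  by apply: ler_sum => j' _; rewrite /pL; case: ifP.
have le_2C : 2 * C i <= gamma * C i by apply: ler_wpM2r.
have := load_le_cap i; lra.
Qed.

Lemma fit_next_bag (S : {set 'I_m}) sg x :
  x \notin S -> (forall k, k \in S -> q x <= q k) ->
  exists i, \sum_(k in S | sg k == i) q k + q x <= gamma * C i.
Proof.
move=> xS x_le_S.
have [/existsP[k0 /andP[big_k0 x_le_k0]]|/existsPn small] :=
  boolP [exists k0, big_bag k0 && (q x <= q k0)].
  exact: fit_below_big_bag big_k0 x_le_k0.
apply: fit_among_small_bags => // k x_le_k.
by have := small k; rewrite x_le_k andbT.
Qed.

Lemma partial_assignment_exists (S : {set 'I_m}) :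
  exists sg : 'I_m -> 'I_m,
    forall i, \sum_(k in S | sg k == i) q k <= gamma * C i.
Proof.
have [N] := ubnP #|S|; elim: N S => // N IH S ltSN.
have [->|[x0 x0S]] := set_0Vmem S.
  exists id => i; rewrite big_pred0 => [|k]; last by rewrite inE.
  exact: mulr_ge0.
have [x xS x_min] := arg_minP q x0S; have {}xS : x \in S := xS.
have xS' : x \notin S :\ x by rewrite setD11.
have [sg fit_sg] : exists sg : 'I_m -> 'I_m,
    forall i, \sum_(k in S :\ x | sg k == i) q k <= gamma * C i.
  by apply: IH; rewrite (cardsD1 x S) xS in ltSN.
have [i0 fit_x] :
    exists i0, \sum_(k in S :\ x | sg k == i0) q k + q x <= gamma * C i0.
  by apply: fit_next_bag => // k; rewrite in_setD1 => /andP[_ /x_min].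
exists (fun k => if k == x then i0 else sg k) => i.
rewrite -(setD1K xS) big_mkcondr big_setU1 //= eqxx.
rewrite (eq_bigr (fun k => if sg k == i then q k else 0)) => [|k]; last first.
  by rewrite in_setD1 => /andP[/negbTE ->].
rewrite -big_mkcondr; case: eqP => [<-|_]; first by rewrite addrC.
by rewrite add0r.
Qed.

Lemma greedy_bag_assignment :
  exists sg : 'I_m -> 'I_m, forall i, \sum_(k | sg k == i) q k <= gamma * C i.
Proof.
have [sg fit_sg] := partial_assignment_exists setT.
by exists sg => i; have := fit_sg i; under eq_bigl do rewrite in_setT.
Qed.

End Greedy.

Theorem lemma2 (R : realFieldType) (n m : nat) (p : 'I_n -> R) (b : 'I_n -> 'I_m) :
  (forall j, 0 <= p j) ->
  (forall k : 'I_m, 0 < load p b k) ->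
  robust p b (Num.max 2 (beta p b)).
Proof.
move=> p_ge0 bag_gt0 s s_gt0.
set gamma := Num.max 2 (beta p b).
have gamma_ge2 : 2 <= gamma by rewrite le_max lexx.
have beta_le_gamma : beta p b <= gamma by rewrite le_max lexx orbT.
have [a0 a0_opt] := optimal_assignment_exists p s b.
have [sg fit_sg] := greedy_bag_assignment p_ge0 bag_gt0 gamma_ge2 beta_le_gamma
  (load_le_makespan p s s_gt0 a0).
have gamma_ge0 : 0 <= gamma by apply: le_trans gamma_ge2.
exists sg => a; apply: (le_trans (y := gamma * makespan p s a0)).
  apply: makespan_le => // [|i]; first by rewrite mulr_ge0 ?makespan_ge0.
  by rewrite load_comp -mulrA.
by apply: ler_wpM2l.
Qed.
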